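(* Let $\Lambda=\mathbb Z[t^{\pm1}]$ and suppose $0\in W\subseteq\Lambda$. Then $W=\Lambda$ if and only if $W$ is closed under each of the following four binary operations: (1) $(w_1,w_2)\mapsto tw_1+(1-t)w_2$; (2) $(w_1,w_2)\mapsto 1+tw_1+(t-1)w_2$; (3) $(w_1,w_2)\mapsto t^{-1}w_1+(1-t^{-1})w_2$; (4) $(w_1,w_2)\mapsto -t^{-1}+t^{-1}w_1+(t^{-1}-1)w_2$. *)

(* Lambda = Z[t, t^-1] realised inside the fraction field
   {fraction {poly int}} = Q-free rational functions over Z, as the set of
   elements p / t^n with p in Z[t], n in N. *)
From HB Require Import structures.
From mathcomp Require Import all_boot all_order all_algebra fraction.
Set Implicit Arguments. Unset Strict Implicit. Unset Printing Implicit Defensive.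
Import Order.TTheory GRing.Theory Num.Theory.
Local Open Scope ring_scope.

Definition RF := {fraction {poly int}}.

Definition toF (p : {poly int}) : RF := @FracField.tofrac _ p.

Definition tL : RF := toF 'X.

Definition laurent (x : RF) : Prop :=
  exists (p : {poly int}) (n : nat), x = toF p / tL ^+ n.

From HB Require Import structures.
From mathcomp Require Import all_boot all_order all_algebra fraction.
Import GRing.Theory.
Local Open Scope ring_scope.

(* Setting w2 = 0 in operations (1) and (3) shows that W is stable under
   multiplication by t and by t^-1; combined with (2) and (4) this gives
   stability under x |-> x + 1 and x |-> x - 1.  Starting from 0, Horner's
   scheme then reaches every polynomial in t, and dividing by powers of t every
   Laurent polynomial.  The converse holds since Lambda is a ring containing
   t^-1. *)

Lemma tL_neq0 : tL != 0.
Proof. by rewrite /tL /toF tofrac_eq0 polyX_eq0. Qed.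

Lemma toF_Xn n : toF 'X^n = tL ^+ n.
Proof. by rewrite /toF tofracXn. Qed.

Lemma laurent_toF p : laurent (toF p).
Proof. by exists p, 0%N; rewrite expr0 divr1. Qed.

Lemma laurent1 : laurent 1.
Proof. by have := laurent_toF 1; rewrite /toF tofrac1. Qed.

Lemma laurent_tL : laurent tL.
Proof. exact: laurent_toF. Qed.

Lemma laurent_tLV : laurent tL^-1.
Proof. by exists 1, 1%N; rewrite /toF tofrac1 expr1 div1r. Qed.

Lemma laurentN x : laurent x -> laurent (- x).
Proof. by move=> [p [n ->]]; exists (- p), n; rewrite /toF tofracN mulNr. Qed.

Lemma laurentD x y : laurent x -> laurent y -> laurent (x + y).
Proof.
move=> [p [n ->]] [q [m ->]]; exists (p * 'X^m + q * 'X^n), (n + m)%N.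
rewrite addf_div ?expf_neq0 ?tL_neq0 //.
by rewrite /toF tofracD !tofracM -/(toF 'X^m) -/(toF 'X^n) !toF_Xn exprD mulrC.
Qed.

Lemma laurentM x y : laurent x -> laurent y -> laurent (x * y).
Proof.
move=> [p [n ->]] [q [m ->]]; exists (p * q), (n + m)%N.
by rewrite mulf_div /toF tofracM exprD.
Qed.

Section ClosedUnderOperations.

Variable W : RF -> Prop.
Hypothesis W0 : W 0.
Hypothesis W_op1 : forall w1 w2, W w1 -> W w2 -> W (tL * w1 + (1 - tL) * w2).
Hypothesis W_op2 :
  forall w1 w2, W w1 -> W w2 -> W (1 + tL * w1 + (tL - 1) * w2).
Hypothesis W_op3 :
  forall w1 w2, W w1 -> W w2 -> W (tL^-1 * w1 + (1 - tL^-1) * w2).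
Hypothesis W_op4 :
  forall w1 w2, W w1 -> W w2 -> W (- tL^-1 + tL^-1 * w1 + (tL^-1 - 1) * w2).

Lemma W_mult x : W x -> W (tL * x).
Proof. by move=> /W_op1 /(_ W0); rewrite mulr0 addr0. Qed.

Lemma W_mulVt x : W x -> W (tL^-1 * x).
Proof. by move=> /W_op3 /(_ W0); rewrite mulr0 addr0. Qed.

Lemma W_add1 x : W x -> W (x + 1).
Proof.
move=> /W_mulVt /W_op2 /(_ W0).
by rewrite mulr0 addr0 mulrA mulfV ?tL_neq0 // mul1r addrC.
Qed.

Lemma W_sub1 x : W x -> W (x - 1).
Proof.
move=> /W_op4 /(_ W0) /W_mult.
rewrite mulr0 addr0 mulrDr mulrN mulfV ?tL_neq0 // mulrA mulfV ?tL_neq0 //.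
by rewrite mul1r addrC.
Qed.

Lemma W_add_nat x (n : nat) : W x -> W (x + n%:R) /\ W (x - n%:R).
Proof.
move=> Wx; elim: n => [|n [IHadd IHsub]]; first by rewrite subr0 addr0.
by rewrite -natr1 addrA opprD addrA; split; [apply: W_add1 | apply: W_sub1].
Qed.

Lemma W_add_int x (c : int) : W x -> W (x + c%:~R).
Proof.
move=> Wx; case: c => n; first by have [] := W_add_nat x n Wx.
by rewrite NegzE mulrNz; have [] := W_add_nat x n.+1 Wx.
Qed.

Lemma W_toF p : W (toF p).
Proof.
elim/poly_ind: p => [|p c IHp]; first by rewrite /toF tofrac0.
have -> : c%:P = c%:~R :> {poly int} by rewrite -[c in c%:P]intz rmorph_int.
rewrite /toF tofracD tofracM -/(toF p) -/tL rmorph_int mulrC.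
exact/W_add_int/W_mult.
Qed.

Lemma W_laurent x : laurent x -> W x.
Proof.
move=> [p [n ->]]; elim: n => [|n IHn]; first by rewrite expr0 divr1; apply: W_toF.
by rewrite exprS invfM mulrCA; apply: W_mulVt.
Qed.

End ClosedUnderOperations.

Theorem lemma14 (W : RF -> Prop)
  (hWsub : forall x, W x -> laurent x) (hW0 : W 0) :
  (forall x, W x <-> laurent x) <->
  [/\ (forall w1 w2, W w1 -> W w2 -> W (tL * w1 + (1 - tL) * w2)),
      (forall w1 w2, W w1 -> W w2 -> W (1 + tL * w1 + (tL - 1) * w2)),
      (forall w1 w2, W w1 -> W w2 -> W (tL^-1 * w1 + (1 - tL^-1) * w2)) &
      (forall w1 w2, W w1 -> W w2 -> W (- tL^-1 + tL^-1 * w1 + (tL^-1 - 1) * w2))].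
Proof.
split=> [WE | [W1 W2 W3 W4] x]; last first.
  by split; [apply: hWsub | apply: W_laurent].
have L1 := laurent1; have Lt := laurent_tL; have LVt := laurent_tLV.
split=> w1 w2 /WE L_w1 /WE L_w2; apply/WE;
  repeat first [apply: laurentD | apply: laurentM | apply: laurentN | eassumption].
Qed.
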